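(* Let $\mathbf{A},\mathbf{B},\mathbf{C}$ be trees with $\mathbf{A}$ infinite. If $\mathbf{A}\mathbf{B}=\mathbf{A}\mathbf{C}$, then $\mathbf{B}=\mathbf{C}$.
   Context: A tree is a (possibly empty, possibly infinite) rooted in-tree in which every vertex has finitely many in-neighbours: an acyclic weakly connected digraph with a root having no outgoing arc, every other vertex having exactly one outgoing arc (to its parent), arcs directed towards the root. Trees are considered up to isomorphism. The depth of a vertex is its distance to the root. The product of trees $\mathbf{F},\mathbf{G}$ has vertex set $\{(a,b):\operatorname{depth}(a)=\operatorname{depth}(b)\}$ and an arc $(a,b)\to(a',b')$ whenever $a\to a'$ and $b\to b'$ are arcs of $\mathbf{F}$ and $\mathbf{G}$ respectively. *)

From Stdlib Require Import List.

(* A "rooted digraph" in which every vertex has at most one outgoing arc: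
   par x = Some y  means the arc x -> y (y is the parent of x),
   par x = None    means x has no outgoing arc (x is a root). *)
Record rgraph := RG { vtx : Type; par : vtx -> option vtx }.

Arguments par {r} _.

Fixpoint anc (T : rgraph) (n : nat) (x : vtx T) : option (vtx T) :=
  match n with
  | 0 => Some x
  | S m => match par x with Some y => anc T m y | None => None end
  end.

(* A tree: at most one root, every vertex reaches the root in finitely many
   steps (so acyclic, weakly connected, the root is the unique vertex without
   outgoing arc when nonempty), and every vertex has finitely many in-neighbours.
   The empty tree is allowed. *)
Definition is_tree (T : rgraph) : Prop :=
  (forall x y : vtx T, par x = None -> par y = None -> x = y) /\
  (forall x : vtx T, exists n, anc T n x = None) /\
  (forall y : vtx T, exists l : list (vtx T), forall x, par x = Some y -> In x l).

Definition infinite_tree (T : rgraph) : Prop :=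
  ~ exists l : list (vtx T), forall x : vtx T, In x l.

Definition same_depth (F G : rgraph) (a : vtx F) (b : vtx G) : Prop :=
  forall n, anc F n a = None <-> anc G n b = None.

Lemma same_depth_par (F G : rgraph) (a a' : vtx F) (b b' : vtx G) :
  same_depth F G a b -> par a = Some a' -> par b = Some b' -> same_depth F G a' b'.
Proof.
  intros H Ha Hb n. specialize (H (S n)). simpl in H. rewrite Ha, Hb in H. exact H.
Qed.

(* The product of trees: vertices are pairs of vertices of equal depth, with an
   arc (a,b) -> (a',b') iff a -> a' and b -> b'. *)
Definition prod_vtx (F G : rgraph) : Type :=
  { p : vtx F * vtx G | same_depth F G (fst p) (snd p) }.

Definition prod_par (F G : rgraph) (x : prod_vtx F G) : option (prod_vtx F G) :=
  match x with
  | exist _ (a, b) H =>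
    match par a as oa return par a = oa -> option (prod_vtx F G) with
    | Some a' => fun Ha =>
      match par b as ob return par b = ob -> option (prod_vtx F G) with
      | Some b' => fun Hb =>
          Some (exist _ (a', b') (same_depth_par F G a a' b b' H Ha Hb))
      | None => fun _ => None
      end eq_refl
    | None => fun _ => None
    end eq_refl
  end.

Definition tprod (F G : rgraph) : rgraph := RG (prod_vtx F G) (prod_par F G).

Definition iso (F G : rgraph) : Prop :=
  exists (f : vtx F -> vtx G) (g : vtx G -> vtx F),
    (forall x, g (f x) = x) /\ (forall y, f (g y) = y) /\
    (forall x, par (f x) = option_map f (par x)).

(* Count level-preserving homomorphisms from finite rooted trees: hom x v is the
   number of maps from x into the subtree below v sending the root to v and arcs to
   arcs.  These counts are multiplicative on products, [hom_AB x (a,b) = hom_A x a *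
   hom_B x b], and invariant under isomorphism.  As A is infinite, every level of A is
   nonempty, so hom_A x (root) > 0 and the root counts of B and C agree for every x.
   Gluing two finite trees at their roots multiplies the counts, so the count vectors
   span a ring of functions containing the constants; a polynomial separating one count
   vector from finitely many others shows that the multiset of count vectors of the
   children of a vertex is determined by their sums, i.e. by the counts of the vertex
   itself.  Matching the children of equivalent vertices level by level then builds an
   isomorphism B ~ C. *)

From Stdlib Require Import List Lia ZArith Permutation FinFun.
From Stdlib Require Import Classical ClassicalEpsilon ProofIrrelevance.
Import ListNotations.

Definition listing {T : Type} (P : T -> Prop) (l : list T) : Prop :=
  NoDup l /\ forall x, In x l <-> P x.

Lemma listing_Permutation {T : Type} (P Q : T -> Prop) (l l' : list T) :
  (forall x, P x <-> Q x) -> listing P l -> listing Q l' -> Permutation l l'.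
Proof.
  intros PQ [N H] [N' H']. apply NoDup_Permutation; auto.
  intros x. rewrite H, H', PQ. reflexivity.
Qed.

Lemma listing_map_injective {U V : Type} (f : U -> V) (P : U -> Prop) l :
  Injective f -> listing P l -> listing (fun y => exists x, P x /\ f x = y) (map f l).
Proof.
  intros f_inj [N H]. split; [apply Injective_map_NoDup; auto|].
  intros y. rewrite in_map_iff. split; intros [x [? ?]]; exists x; split; try apply H; auto.
Qed.

Lemma listing_of_injective_cover {T Q : Type} (g : T -> Q) (P : T -> Prop) (M : list Q) :
  Injective g -> (forall x, P x -> In (g x) M) -> exists l, listing P l.
Proof.
  intros g_inj. induction M as [|q M IH] in P |- *; intros cover.
  - exists []. split; [constructor|]. intros x; split; [intros []|exact (cover x)].
  - destruct (IH (fun x => P x /\ g x <> q)) as [l [N H]].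
    { intros x [Px Hx]. destruct (cover x Px) as [E|I]; [congruence|exact I]. }
    destruct (classic (exists x, P x /\ g x = q)) as [[x [Px Ex]]|Hnone].
    + exists (x :: l). split.
      * constructor; [rewrite H; tauto|exact N].
      * intros y. simpl. rewrite H. split; [intros [<-|[]]; auto|].
        intros Py. destruct (classic (g y = q)) as [Ey|Ey]; [left|right; auto].
        apply g_inj. congruence.
    + exists l. split; [exact N|]. intros y. rewrite H. split; [tauto|].
      intros Py. split; [exact Py|]. intros Ey. apply Hnone. eauto.
Qed.

Lemma NoDup_list_prod {U V : Type} (l1 : list U) (l2 : list V) :
  NoDup l1 -> NoDup l2 -> NoDup (list_prod l1 l2).
Proof.
  intros N1 N2. induction N1 as [|a l1 Ha N1 IH]; simpl; [constructor|].
  apply NoDup_app; auto.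
  - apply Injective_map_NoDup; auto. intros b b' E. congruence.
  - intros [a' b] Hin Hin'. apply in_map_iff in Hin as [? [E _]].
    injection E as <- _. apply in_prod_iff in Hin' as [? _]. contradiction.
Qed.

Lemma Forall2_bijection {U V : Type} (R : U -> V -> Prop) (du : U) (dv : V) lb lc :
  NoDup lb -> NoDup lc -> Forall2 R lb lc ->
  exists (s : U -> V) (t : V -> U),
    (forall b, In b lb -> In (s b) lc /\ t (s b) = b /\ R b (s b)) /\
    (forall c, In c lc -> In (t c) lb /\ s (t c) = c).
Proof.
  intros Nb Nc HR. induction HR as [|b c lb lc Rbc HR IH].
  - exists (fun _ => dv), (fun _ => du). simpl. tauto.
  - apply NoDup_cons_iff in Nb as [b_notin Nb], Nc as [c_notin Nc].
    destruct (IH Nb Nc) as [s [t [Hs Ht]]].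
    exists (fun b' => if excluded_middle_informative (b' = b) then c else s b').
    exists (fun c' => if excluded_middle_informative (c' = c) then b else t c').
    split.
    + intros b' Hb'. destruct (excluded_middle_informative (b' = b)) as [->|nb].
      * destruct (excluded_middle_informative (c = c)) as [_|]; [simpl; auto|congruence].
      * destruct Hb' as [->|Hb']; [congruence|]. destruct (Hs b' Hb') as [Hin [Hts Rs]].
        destruct (excluded_middle_informative (s b' = c)) as [E|_];
          [rewrite E in Hin; contradiction|simpl; auto].
    + intros c' Hc'. destruct (excluded_middle_informative (c' = c)) as [->|nc].
      * destruct (excluded_middle_informative (b = b)) as [_|]; [simpl; auto|congruence].
      * destruct Hc' as [->|Hc']; [congruence|]. destruct (Ht c' Hc') as [Hin Hst].
        destruct (excluded_middle_informative (t c' = b)) as [E|_];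
          [rewrite E in Hin; contradiction|simpl; auto].
Qed.

Lemma list_sum_map_Permutation {U : Type} (f : U -> nat) l l' :
  Permutation l l' -> list_sum (map f l) = list_sum (map f l').
Proof. intros P. apply Permutation_list_sum, Permutation_map, P. Qed.

Lemma list_sum_list_prod {U V : Type} (f : U -> nat) (g : V -> nat) l1 l2 :
  list_sum (map (fun ab => f (fst ab) * g (snd ab)) (list_prod l1 l2)) =
  list_sum (map f l1) * list_sum (map g l2).
Proof.
  induction l1 as [|a l1 IH]; simpl; auto.
  rewrite map_app, list_sum_app, IH, map_map. simpl. rewrite Nat.mul_add_distr_r. f_equal.
  clear. induction l2; simpl; lia.
Qed.

Lemma list_sum_pos {U : Type} (f : U -> nat) l c : In c l -> 0 < f c -> 0 < list_sum (map f l).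
Proof.
  induction l as [|u l IH]; simpl; [tauto|].
  intros [<-|Hc] Hpos; [lia|]. specialize (IH Hc Hpos). lia.
Qed.

Definition list_product (l : list nat) : nat := fold_right Nat.mul 1 l.

Lemma list_product_app l l' : list_product (l ++ l') = list_product l * list_product l'.
Proof. induction l; simpl; lia. Qed.

Lemma list_product_map_mul {U : Type} (f g : U -> nat) (l : list U) :
  list_product (map (fun y => f y * g y) l) = list_product (map f l) * list_product (map g l).
Proof. induction l; simpl; lia. Qed.

Lemma list_product_pos l : (forall n, In n l -> 0 < n) -> 0 < list_product l.
Proof.
  induction l as [|n l IH]; simpl; intros Hpos; [lia|].
  assert (0 < n) by (apply Hpos; left; reflexivity).
  assert (0 < list_product l) by (apply IH; intros m Hm; apply Hpos; right; exact Hm). nia.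
Qed.

Definition sumZ (l : list Z) : Z := fold_right Z.add 0%Z l.

Lemma sumZ_map_add {U : Type} (f g : U -> Z) l :
  sumZ (map (fun w => f w + g w)%Z l) = (sumZ (map f l) + sumZ (map g l))%Z.
Proof. induction l; simpl; lia. Qed.

Lemma sumZ_map_scale_nat {U : Type} (c : Z) (f : U -> nat) l :
  sumZ (map (fun w => c * Z.of_nat (f w))%Z l) = (c * Z.of_nat (list_sum (map f l)))%Z.
Proof. induction l; simpl; lia. Qed.

Lemma sumZ_map_sq_nonneg {U : Type} (f : U -> Z) l : (0 <= sumZ (map (fun w => f w * f w)%Z l))%Z.
Proof. induction l; simpl; nia. Qed.

Lemma sumZ_map_zero {U : Type} (f : U -> Z) l :
  (forall w, In w l -> f w = 0%Z) -> sumZ (map f l) = 0%Z.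
Proof. induction l; simpl; intros H; auto. rewrite H, IHl; auto. Qed.

Lemma anc_add (T : rgraph) (n m : nat) (d : vtx T) :
  anc T (n + m) d = match anc T n d with Some y => anc T m y | None => None end.
Proof. induction n in d |- *; simpl; auto. destruct (par d); auto. Qed.

Lemma anc_le (T : rgraph) (d a : vtx T) m k : anc T m d = Some a -> k <= m ->
  exists d', anc T k d' = Some a.
Proof.
  intros Hd Hk. replace m with ((m - k) + k) in Hd by lia. rewrite anc_add in Hd.
  destruct (anc T (m - k) d) as [d'|]; [exists d'; exact Hd|discriminate].
Qed.

Lemma tree_ind (T : rgraph) (P : vtx T -> Prop) : is_tree T ->
  (forall r, par r = None -> P r) -> (forall b p, par b = Some p -> P p -> P b) ->
  forall b, P b.
Proof.
  intros [_ [reach _]] Proot Pstep b. destruct (reach b) as [n Hn].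
  induction n as [|n IH] in b, Hn |- *; simpl in Hn; [discriminate|].
  destruct (par b) as [p|] eqn:Hb; eauto.
Qed.

Lemma anc_root (T : rgraph) (r : vtx T) :
  is_tree T -> par r = None -> forall y, exists m, anc T m y = Some r.
Proof.
  intros HT Hr. apply (tree_ind T); auto.
  - intros y Hy. exists 0. simpl. f_equal. exact (proj1 HT y r Hy Hr).
  - intros b p Hb [m Hm]. exists (S m). simpl. rewrite Hb. exact Hm.
Qed.

Lemma tree_root_or_empty (T : rgraph) :
  is_tree T -> (exists r : vtx T, par r = None) \/ (vtx T -> False).
Proof.
  intros HT. destruct (classic (inhabited (vtx T))) as [[v]|Hv].
  - left. revert v. apply (tree_ind T); eauto.
  - right. intros v. apply Hv. constructor. exact v.
Qed.

Lemma infinite_tree_has_root (T : rgraph) :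
  is_tree T -> infinite_tree T -> exists r : vtx T, par r = None.
Proof.
  intros HT Hinf. destruct (tree_root_or_empty T HT) as [Hr|Hempty]; [exact Hr|].
  destruct Hinf. exists []. intros v. destruct (Hempty v).
Qed.

(* Recursion from the roots down, with fuel: any fuel exceeding the depth of b gives the
   same value at b. *)
Section TreeRecursion.
Variables (T : rgraph) (Y : Type) (y0 : Y) (step : vtx T -> Y -> vtx T -> Y).

Fixpoint walk (n : nat) (b : vtx T) : Y :=
  match n with
  | 0 => y0
  | S n => match par b with Some p => step p (walk n p) b | None => y0 end
  end.

Lemma walk_fuel_irrelevant n m b :
  anc T n b = None -> anc T m b = None -> walk n b = walk m b.
Proof.
  induction n as [|n IH] in m, b |- *; intros Hn Hm; [discriminate|].
  destruct m as [|m]; [discriminate|]. simpl in *.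
  destruct (par b); [f_equal; auto|reflexivity].
Qed.

Lemma tree_rec : is_tree T -> exists f : vtx T -> Y,
  (forall r, par r = None -> f r = y0) /\
  (forall b p, par b = Some p -> f b = step p (f p) b).
Proof.
  intros [_ [reach _]]. destruct (choice _ reach) as [N HN].
  exists (fun b => walk (N b) b). split.
  - intros r Hr. pose proof (HN r) as Hr'.
    destruct (N r); [discriminate|]. simpl. rewrite Hr. reflexivity.
  - intros b p Hb. pose proof (HN b) as Hb'.
    destruct (N b) as [|n]; [discriminate|]. simpl in *. rewrite Hb in *.
    f_equal. apply walk_fuel_irrelevant; auto.
Qed.

End TreeRecursion.

Definition children_list (T : rgraph) (ch : vtx T -> list (vtx T)) : Prop :=
  forall y, listing (fun x => par x = Some y) (ch y).

Lemma tree_children_list (T : rgraph) : is_tree T -> exists ch, children_list T ch.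
Proof.
  intros [_ [_ fin]]. apply (choice (fun y l => listing (fun x => par x = Some y) l)).
  intros y. destruct (fin y) as [l Hl].
  apply (listing_of_injective_cover (fun x => x) _ l); auto. intros x x' E; exact E.
Qed.

Lemma anc_levels_finite (T : rgraph) (ch : vtx T -> list (vtx T)) (r : vtx T) :
  is_tree T -> children_list T ch -> par r = None ->
  forall n, exists l, forall y, anc T n y = None -> In y l.
Proof.
  intros HT Hch Hr n. induction n as [|n [l IH]]; [exists []; discriminate|].
  exists (r :: flat_map ch l). intros y Hy. simpl in Hy. destruct (par y) as [z|] eqn:Hz.
  - right. apply in_flat_map. exists z. split; [apply IH, Hy|apply Hch, Hz].
  - left. exact (proj1 HT r y Hr Hz).
Qed.

Lemma infinite_tree_anc_root (T : rgraph) (ch : vtx T -> list (vtx T)) (r : vtx T) :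
  is_tree T -> children_list T ch -> infinite_tree T -> par r = None ->
  forall n, exists d, anc T n d = Some r.
Proof.
  intros HT Hch Hinf Hr n. apply NNPP. intros Hnone.
  destruct (anc_levels_finite T ch r HT Hch Hr n) as [l Hl].
  apply Hinf. exists l. intros y. apply Hl.
  destruct (anc T n y) as [z|] eqn:Hy; [exfalso|reflexivity].
  destruct (anc_root T r HT Hr z) as [m Hm].
  pose proof (anc_add T n m y) as E. rewrite Hy, Hm, Nat.add_comm, anc_add in E.
  destruct (anc T m y) as [d|]; [|discriminate]. apply Hnone. exists d. exact E.
Qed.

(** * Isomorphisms from matchings of children *)

Definition maps_children {B C : rgraph} (R : vtx B -> vtx C -> Prop)
    (p : vtx B) (q : vtx C) (s : vtx B -> vtx C) : Prop :=
  forall b, par b = Some p -> par (s b) = Some q /\ R b (s b).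

Definition child_matching {B C : rgraph} (R : vtx B -> vtx C -> Prop)
    (p : vtx B) (q : vtx C) (s : vtx B -> vtx C) (t : vtx C -> vtx B) : Prop :=
  maps_children R p q s /\ maps_children (fun c b => R b c) q p t /\
  (forall b, par b = Some p -> t (s b) = b) /\ (forall c, par c = Some q -> s (t c) = c).

Section RecursiveMatching.
Variables (B C : rgraph) (R : vtx B -> vtx C -> Prop) (rB : vtx B) (rC : vtx C).
Variables (s : vtx B -> vtx C -> vtx B -> vtx C) (f : vtx B -> vtx C).
Hypothesis B_tree : is_tree B.
Hypothesis rB_root : par rB = None.
Hypothesis rC_root : par rC = None.
Hypothesis R_roots : R rB rC.
Hypothesis s_maps_children : forall p q, R p q -> maps_children R p q (s p q).
Hypothesis f_root : forall r, par r = None -> f r = rC.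
Hypothesis f_step : forall b p, par b = Some p -> f b = s p (f p) b.

Lemma matching_rec_hom b : R b (f b) /\ par (f b) = option_map f (par b).
Proof.
  revert b. apply tree_ind; auto.
  - intros r Hr. rewrite Hr, f_root, (proj1 B_tree r rB Hr rB_root) by auto. auto.
  - intros b p Hb [Rp _]. rewrite Hb, (f_step _ _ Hb). simpl.
    destruct (s_maps_children _ _ Rp b Hb). auto.
Qed.

Variables (t : vtx B -> vtx C -> vtx C -> vtx B) (g : vtx C -> vtx B).
Hypothesis t_s : forall p q b, R p q -> par b = Some p -> t p q (s p q b) = b.
Hypothesis g_root : forall r, par r = None -> g r = rB.
Hypothesis g_step : forall c q, par c = Some q -> g c = t (g q) q c.

Lemma matching_rec_cancel b : g (f b) = b.
Proof.
  revert b. apply tree_ind; auto.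
  - intros r Hr. rewrite f_root, g_root by auto. exact (proj1 B_tree rB r rB_root Hr).
  - intros b p Hb IH. destruct (matching_rec_hom p) as [Rp _].
    destruct (matching_rec_hom b) as [_ Pb]. rewrite Hb in Pb.
    rewrite (g_step _ _ Pb), IH, (f_step _ _ Hb). auto.
Qed.

End RecursiveMatching.

Lemma iso_of_child_matchings (B C : rgraph) (R : vtx B -> vtx C -> Prop)
    (rB : vtx B) (rC : vtx C) :
  is_tree B -> is_tree C -> par rB = None -> par rC = None -> R rB rC ->
  (forall p q, R p q -> exists s t, child_matching R p q s t) -> iso B C.
Proof.
  intros TB TC HrB HrC Rr matching.
  assert (choice_st : forall pq : vtx B * vtx C, exists st : (vtx B -> vtx C) * (vtx C -> vtx B),
    R (fst pq) (snd pq) -> child_matching R (fst pq) (snd pq) (fst st) (snd st)).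
  { intros [p q]. destruct (classic (R p q)) as [Rpq|nR].
    - destruct (matching p q Rpq) as [s [t M]]. exists (s, t). auto.
    - exists (fun _ => q, fun _ => p). tauto. }
  destruct (choice _ choice_st) as [ST HST].
  set (s := fun p q => fst (ST (p, q))). set (t := fun p q => snd (ST (p, q))).
  destruct (tree_rec B (vtx C) rC s TB) as [f [f_root f_step]].
  destruct (tree_rec C (vtx B) rB (fun q p => t p q) TC) as [g [g_root g_step]].
  assert (s_maps : forall p q, R p q -> maps_children R p q (s p q))
    by (intros p q Rpq; apply (HST (p, q) Rpq)).
  assert (t_maps : forall q p, R p q -> maps_children (fun c b => R b c) q p (t p q))
    by (intros q p Rpq; apply (HST (p, q) Rpq)).
  assert (t_s : forall p q b, R p q -> par b = Some p -> t p q (s p q b) = b)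
    by (intros p q b Rpq; apply (HST (p, q) Rpq)).
  assert (s_t : forall q p c, R p q -> par c = Some q -> s p q (t p q c) = c)
    by (intros q p c Rpq; apply (HST (p, q) Rpq)).
  exists f, g. split; [|split].
  - exact (matching_rec_cancel B C R rB rC s f TB HrB HrC Rr s_maps f_root f_step
             t g t_s g_root g_step).
  - exact (matching_rec_cancel C B (fun c b => R b c) rC rB (fun q p => t p q) g TC HrC HrB Rr
             t_maps g_root g_step (fun q p => s p q) f s_t f_root f_step).
  - intros b.
    exact (proj2 (matching_rec_hom B C R rB rC s f TB HrB HrC Rr s_maps f_root f_step b)).
Qed.

Lemma iso_of_empty (B C : rgraph) : (vtx B -> False) -> (vtx C -> False) -> iso B C.
Proof.
  intros NB NC. exists (fun b => match NB b with end), (fun c => match NC c with end).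
  split; [|split]; intros v; [destruct (NB v)|destruct (NC v)|destruct (NB v)].
Qed.

(** * Products of trees *)

Section Product.
Variables F G : rgraph.

Lemma tprod_vtx_eq (p q : vtx (tprod F G)) : proj1_sig p = proj1_sig q -> p = q.
Proof. destruct p, q; simpl. intros ->. f_equal. apply proof_irrelevance. Qed.

Lemma tprod_par_proj (p : vtx (tprod F G)) :
  option_map (@proj1_sig _ _) (par p) =
  match par (fst (proj1_sig p)), par (snd (proj1_sig p)) with
  | Some a', Some b' => Some (a', b')
  | _, _ => None
  end.
Proof.
  destruct p as [[a b] H]. simpl. unfold prod_par.
  generalize (same_depth_par F G a). generalize (par a). intros [a'|] sdp; [|reflexivity].
  generalize (sdp a' b). generalize (par b). intros [b'|] s; reflexivity.
Qed.

Lemma tprod_par_Some (p q : vtx (tprod F G)) :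
  par q = Some p <-> par (fst (proj1_sig q)) = Some (fst (proj1_sig p)) /\
                     par (snd (proj1_sig q)) = Some (snd (proj1_sig p)).
Proof.
  pose proof (tprod_par_proj q) as E. split.
  - intros H. rewrite H in E. simpl in E.
    destruct (par (fst _)), (par (snd _)); try discriminate.
    injection E as E. rewrite E. auto.
  - intros [H1 H2]. rewrite H1, H2 in E.
    destruct (par q) as [p'|]; [|discriminate]. injection E as E.
    f_equal. apply tprod_vtx_eq. rewrite E. destruct (proj1_sig p); reflexivity.
Qed.

Lemma tprod_root_components (q : vtx (tprod F G)) :
  par q = None -> par (fst (proj1_sig q)) = None /\ par (snd (proj1_sig q)) = None.
Proof.
  intros Hq. pose proof (tprod_par_proj q) as E. rewrite Hq in E. clear Hq.
  destruct q as [[a b] Hab]. pose proof (Hab 1) as H1. simpl in *.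
  destruct (par a), (par b); try discriminate; [..|tauto].
  - discriminate (proj2 H1 eq_refl).
  - discriminate (proj1 H1 eq_refl).
Qed.

Definition root_pair (a : vtx F) (b : vtx G) (Ha : par a = None) (Hb : par b = None) :
  vtx (tprod F G).
Proof.
  exists (a, b). intros [|n]; simpl; [split; discriminate|]. rewrite Ha, Hb. tauto.
Defined.

Lemma root_pair_root a b Ha Hb : par (root_pair a b Ha Hb) = None.
Proof.
  destruct (par (root_pair a b Ha Hb)) as [p|] eqn:E; auto.
  apply tprod_par_Some in E as [E _]. simpl in E. congruence.
Qed.

Definition pair_children (p : vtx (tprod F G)) (ab : vtx F * vtx G) : Prop :=
  par (fst ab) = Some (fst (proj1_sig p)) /\ par (snd ab) = Some (snd (proj1_sig p)).

Lemma tprod_children_proj (p : vtx (tprod F G)) ab :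
  (exists q, par q = Some p /\ proj1_sig q = ab) <-> pair_children p ab.
Proof.
  unfold pair_children. split.
  - intros [q [Hq <-]]. apply tprod_par_Some, Hq.
  - destruct p as [[a b] Hab], ab as [a' b']. cbn [fst snd proj1_sig] in *. intros [Ha Hb].
    assert (Hs : same_depth F G a' b').
    { intros [|n]; simpl; [split; discriminate|]. rewrite Ha, Hb. apply Hab. }
    exists (exist _ (a', b') Hs). split; auto. apply tprod_par_Some. auto.
Qed.

Variables (chF : vtx F -> list (vtx F)) (chG : vtx G -> list (vtx G)).
Hypotheses (HF : children_list F chF) (HG : children_list G chG).

Lemma listing_pair_children (p : vtx (tprod F G)) :
  listing (pair_children p) (list_prod (chF (fst (proj1_sig p))) (chG (snd (proj1_sig p)))).
Proof.
  split; [apply NoDup_list_prod; [apply HF|apply HG]|].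
  intros [a b]. rewrite in_prod_iff. unfold pair_children. simpl.
  rewrite (proj2 (HF _)), (proj2 (HG _)). reflexivity.
Qed.

Lemma tprod_children_list : exists ch, children_list (tprod F G) ch.
Proof.
  apply (choice (fun p l => listing (fun q => par q = Some p) l)). intros p.
  apply (listing_of_injective_cover (@proj1_sig _ _) _
           (list_prod (chF (fst (proj1_sig p))) (chG (snd (proj1_sig p))))).
  - intros q q'. apply tprod_vtx_eq.
  - intros q Hq. apply listing_pair_children, tprod_children_proj. eauto.
Qed.

Lemma tprod_children_Permutation chP : children_list (tprod F G) chP ->
  forall p, Permutation (map (@proj1_sig _ _) (chP p))
                        (list_prod (chF (fst (proj1_sig p))) (chG (snd (proj1_sig p)))).
Proof.
  intros HP p. apply (listing_Permutation _ _ _ _ (tprod_children_proj p)).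
  - apply listing_map_injective; [intros q q'; apply tprod_vtx_eq|apply HP].
  - apply listing_pair_children.
Qed.

End Product.

(** * Counting homomorphisms from finite rooted trees *)

Inductive rtree : Type := Node : list rtree -> rtree.

Section RtreeInd.
Variable P : rtree -> Prop.
Hypothesis P_node : forall xs, Forall P xs -> P (Node xs).

Fixpoint rtree_ind' (x : rtree) : P x :=
  match x with
  | Node xs => P_node xs ((fix all (l : list rtree) : Forall P l :=
      match l with
      | [] => Forall_nil P
      | y :: l' => Forall_cons y (rtree_ind' y) (all l')
      end) xs)
  end.
End RtreeInd.

Fixpoint height (x : rtree) : nat :=
  let '(Node xs) := x in list_max (map (fun y => S (height y)) xs).

Lemma height_child y xs : In y xs -> S (height y) <= height (Node xs).
Proof.
  induction xs as [|x xs IH]; intros Hy; [destruct Hy|].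
  change (height (Node (x :: xs))) with (Nat.max (S (height x)) (height (Node xs))).
  destruct Hy as [->|Hy]; [lia|]. specialize (IH Hy). lia.
Qed.

Definition rtree_join (x y : rtree) : rtree :=
  let '(Node xs) := x in let '(Node ys) := y in Node (xs ++ ys).

Section Hom.
Variables (T : rgraph) (ch : vtx T -> list (vtx T)).

Fixpoint hom (x : rtree) (v : vtx T) : nat :=
  let '(Node xs) := x in list_product (map (fun y => list_sum (map (hom y) (ch v))) xs).

Lemma hom_join x y v : hom (rtree_join x y) v = hom x v * hom y v.
Proof. destruct x, y. simpl. rewrite map_app. apply list_product_app. Qed.

Lemma hom_single x v : hom (Node [x]) v = list_sum (map (hom x) (ch v)).
Proof. simpl. lia. Qed.

Hypothesis ch_spec : children_list T ch.

Lemma hom_pos x a d : anc T (height x) d = Some a -> 0 < hom x a.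
Proof.
  induction x as [xs IH] using rtree_ind' in a, d |- *. intros Hd.
  rewrite Forall_forall in IH. apply list_product_pos. intros n Hn.
  apply in_map_iff in Hn as [y [<- Hy]].
  destruct (anc_le T d a _ (height y + 1) Hd) as [d' Hd'].
  { pose proof (height_child y xs Hy). lia. }
  rewrite anc_add in Hd'. destruct (anc T (height y) d') as [c|] eqn:Ec; [|discriminate].
  simpl in Hd'. destruct (par c) eqn:Hc; [|discriminate]. injection Hd' as ->.
  apply (list_sum_pos _ _ c); [apply ch_spec, Hc|exact (IH y Hy c d' Ec)].
Qed.
End Hom.

Lemma hom_root_pos (T : rgraph) (ch : vtx T -> list (vtx T)) (r : vtx T) x :
  is_tree T -> children_list T ch -> infinite_tree T -> par r = None -> 0 < hom T ch x r.
Proof.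
  intros HT Hch Hinf Hr.
  destruct (infinite_tree_anc_root T ch r HT Hch Hinf Hr (height x)) as [d Hd].
  exact (hom_pos T ch Hch x r d Hd).
Qed.

Section HomIso.
Variables (F G : rgraph) (chF : vtx F -> list (vtx F)) (chG : vtx G -> list (vtx G)).
Hypotheses (HF : children_list F chF) (HG : children_list G chG).

Lemma iso_children_Permutation (f : vtx F -> vtx G) (g : vtx G -> vtx F) :
  (forall x, g (f x) = x) -> (forall y, f (g y) = y) ->
  (forall x, par (f x) = option_map f (par x)) ->
  forall v, Permutation (map f (chF v)) (chG (f v)).
Proof.
  intros gf fg f_par v.
  assert (f_inj : Injective f) by (intros x y E; rewrite <- (gf x), E; auto).
  apply (listing_Permutation (fun c => exists b, par b = Some v /\ f b = c)
           (fun c => par c = Some (f v)));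
    [|apply listing_map_injective; auto|apply HG].
  intros c. split.
  - intros [b [Hb <-]]. rewrite f_par, Hb. reflexivity.
  - intros Hc. exists (g c). split; [|apply fg].
    rewrite <- (fg c), f_par in Hc. destruct (par (g c)) as [w|]; [|discriminate].
    injection Hc as Hw. rewrite (f_inj _ _ Hw). reflexivity.
Qed.

Lemma hom_iso (f : vtx F -> vtx G) (g : vtx G -> vtx F) :
  (forall x, g (f x) = x) -> (forall y, f (g y) = y) ->
  (forall x, par (f x) = option_map f (par x)) ->
  forall x v, hom G chG x (f v) = hom F chF x v.
Proof.
  intros gf fg f_par x. induction x as [xs IH] using rtree_ind'. intros v.
  rewrite Forall_forall in IH. simpl. f_equal. apply map_ext_in. intros y Hy.
  rewrite <- (list_sum_map_Permutation _ _ _ (iso_children_Permutation f g gf fg f_par v)),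
    map_map.
  f_equal. apply map_ext. intros b. apply IH, Hy.
Qed.

Variable (chP : vtx (tprod F G) -> list (vtx (tprod F G))).
Hypothesis (HP : children_list (tprod F G) chP).

Lemma hom_tprod x p :
  hom (tprod F G) chP x p = hom F chF x (fst (proj1_sig p)) * hom G chG x (snd (proj1_sig p)).
Proof.
  induction x as [xs IH] using rtree_ind' in p |- *. rewrite Forall_forall in IH.
  simpl. rewrite <- list_product_map_mul. f_equal. apply map_ext_in. intros y Hy.
  rewrite <- list_sum_list_prod,
    <- (list_sum_map_Permutation _ _ _ (tprod_children_Permutation F G chF chG HF HG chP HP p)),
    map_map.
  f_equal. apply map_ext. intros q. apply IH, Hy.
Qed.
End HomIso.

Lemma tprod_iso_hom_roots (A B C : rgraph) chA chB chC (rA : vtx A) (rB : vtx B) :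
  is_tree A -> children_list A chA -> children_list B chB -> children_list C chC ->
  par rA = None -> par rB = None -> iso (tprod A B) (tprod A C) ->
  exists rC : vtx C, par rC = None /\
    forall x, hom A chA x rA * hom B chB x rB = hom A chA x rA * hom C chC x rC.
Proof.
  intros TA HA HB HC HrA HrB [phi [psi [psi_phi [phi_psi phi_par]]]].
  destruct (tprod_children_list A B chA chB HA HB) as [chAB HAB].
  destruct (tprod_children_list A C chA chC HA HC) as [chAC HAC].
  pose (p := root_pair A B rA rB HrA HrB).
  assert (Hq : par (phi p) = None)
    by (rewrite phi_par; unfold p; rewrite root_pair_root; reflexivity).
  destruct (tprod_root_components A C _ Hq) as [Ha Hc].
  exists (snd (proj1_sig (phi p))). split; [exact Hc|]. intros x.
  pose proof (hom_iso _ _ chAB chAC HAB HAC phi psi psi_phi phi_psi phi_par x p) as E.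
  rewrite (hom_tprod A B chA chB HA HB chAB HAB), (hom_tprod A C chA chC HA HC chAC HAC),
    (proj1 TA _ _ Ha HrA) in E.
  exact (eq_sym E).
Qed.

(** * Sums of count vectors determine their multiset *)

Section Separation.
Variables (X W : Type) (mul : X -> X -> X) (one : X) (h : X -> W -> nat).
Hypothesis h_mul : forall x y w, h (mul x y) w = h x w * h y w.
Hypothesis h_one : forall w, h one w = 1.

Inductive in_span : (W -> Z) -> Prop :=
| span_h c x : in_span (fun w => c * Z.of_nat (h x w))%Z
| span_add f g : in_span f -> in_span g -> in_span (fun w => f w + g w)%Z
| span_ext f g : in_span f -> (forall w, f w = g w) -> in_span g.

Lemma span_const c : in_span (fun _ => c).
Proof. apply (span_ext _ _ (span_h c one)). intros w. rewrite h_one. lia. Qed.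

Lemma span_mul f g : in_span f -> in_span g -> in_span (fun w => f w * g w)%Z.
Proof.
  intros Hf Hg. induction Hf as [c x|f1 f2 _ IH1 _ IH2|f1 f2 _ IH E].
  - induction Hg as [d y|g1 g2 _ IH1 _ IH2|g1 g2 _ IH E].
    + apply (span_ext _ _ (span_h (c * d) (mul x y))). intros w. rewrite h_mul. lia.
    + apply (span_ext _ _ (span_add _ _ IH1 IH2)). intros w. lia.
    + apply (span_ext _ _ IH). intros w. rewrite E. reflexivity.
  - apply (span_ext _ _ (span_add _ _ IH1 IH2)). intros w. lia.
  - apply (span_ext _ _ IH). intros w. rewrite E. reflexivity.
Qed.

Lemma span_sumZ_eq l1 l2 :
  (forall x, list_sum (map (h x) l1) = list_sum (map (h x) l2)) ->
  forall f, in_span f -> sumZ (map f l1) = sumZ (map f l2).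
Proof.
  intros Hsum f Hf. induction Hf as [c x|f g _ IHf _ IHg|f g _ IH E].
  - rewrite !sumZ_map_scale_nat, Hsum. reflexivity.
  - rewrite !sumZ_map_add, IHf, IHg. reflexivity.
  - rewrite <- !(map_ext _ _ E). exact IH.
Qed.

Lemma span_separates u l : (forall v, In v l -> exists x, h x u <> h x v) ->
  exists f, in_span f /\ f u <> 0%Z /\ forall v, In v l -> f v = 0%Z.
Proof.
  induction l as [|v l IH]; intros Hsep.
  - exists (fun _ => 1%Z). split; [apply span_const|]. split; [lia|intros v []].
  - destruct IH as [f [Hf [fu fl]]]; [intros w Hw; apply Hsep; right; exact Hw|].
    destruct (Hsep v (or_introl eq_refl)) as [x Hx].
    exists (fun w => f w * (Z.of_nat (h x w) - Z.of_nat (h x v)))%Z. split; [|split].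
    + apply span_mul; [exact Hf|].
      apply (span_ext _ _ (span_add _ _ (span_h 1 x) (span_const (- Z.of_nat (h x v))))).
      intros w. lia.
    + intros E. apply Z.eq_mul_0 in E. lia.
    + intros w [<-|Hw]; [lia|]. rewrite fl; auto.
Qed.

Lemma sum_eq_twin u l1 l2 :
  (forall x, list_sum (map (h x) (u :: l1)) = list_sum (map (h x) l2)) ->
  exists v, In v l2 /\ forall x, h x u = h x v.
Proof.
  intros Hsum. apply NNPP. intros Hnone.
  (* Sum f^2 over both sides: it vanishes on l2 but is at least (f u)^2 > 0 on u :: l1. *)
  destruct (span_separates u l2) as [f [Hf [fu fl2]]].
  { intros v Hv. apply not_all_ex_not. intros Hx. apply Hnone. eauto. }
  pose proof (span_sumZ_eq _ _ Hsum _ (span_mul _ _ Hf Hf)) as E.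
  rewrite (sumZ_map_zero _ l2) in E by (intros w Hw; rewrite fl2; auto).
  simpl in E. pose proof (sumZ_map_sq_nonneg f l1). nia.
Qed.

End Separation.

Lemma sum_eq_Forall2 (X U V : Type) (mul : X -> X -> X) (one : X)
    (hU : X -> U -> nat) (hV : X -> V -> nat) :
  (forall x y u, hU (mul x y) u = hU x u * hU y u) -> (forall u, hU one u = 1) ->
  (forall x y v, hV (mul x y) v = hV x v * hV y v) -> (forall v, hV one v = 1) ->
  forall lb lc, (forall x, list_sum (map (hU x) lb) = list_sum (map (hV x) lc)) ->
  exists lc', Permutation lc lc' /\ Forall2 (fun b c => forall x, hU x b = hV x c) lb lc'.
Proof.
  intros hU_mul hU_one hV_mul hV_one.
  set (h := fun x (w : U + V) => match w with inl u => hU x u | inr v => hV x v end).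
  assert (h_mul : forall x y w, h (mul x y) w = h x w * h y w) by (intros x y []; simpl; auto).
  assert (h_one : forall w, h one w = 1) by (intros []; simpl; auto).
  induction lb as [|u lb IH]; intros lc Hsum.
  - destruct lc as [|c lc]; [exists []; auto|].
    specialize (Hsum one). simpl in Hsum. rewrite hV_one in Hsum. lia.
  - destruct (sum_eq_twin X (U + V) mul one h h_mul h_one (inl u) (map inl lb) (map inr lc))
      as [w [Hw Huw]].
    { intros x. simpl. rewrite !map_map. exact (Hsum x). }
    apply in_map_iff in Hw as [v [<- Hv]]. apply in_split in Hv as [l1 [l2 ->]].
    destruct (IH (l1 ++ l2)) as [lc' [Hperm Hmatch]].
    { intros x. specialize (Hsum x). simpl in Hsum, Huw. rewrite (Huw x) in Hsum.
      rewrite map_app, list_sum_app in Hsum |- *. simpl in Hsum. lia. }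
    exists (v :: lc'). split; [|constructor; auto].
    rewrite <- Hperm. symmetry. apply Permutation_middle.
Qed.

Section HomMatching.
Variables (B C : rgraph) (chB : vtx B -> list (vtx B)) (chC : vtx C -> list (vtx C)).
Hypotheses (HB : children_list B chB) (HC : children_list C chC).

Definition hom_equiv (b : vtx B) (c : vtx C) : Prop := forall x, hom B chB x b = hom C chC x c.

Lemma hom_equiv_child_matching p q : hom_equiv p q -> exists s t, child_matching hom_equiv p q s t.
Proof.
  intros Hpq.
  destruct (sum_eq_Forall2 rtree (vtx B) (vtx C) rtree_join (Node []) (hom B chB) (hom C chC)
              (hom_join B chB) (fun _ => eq_refl) (hom_join C chC) (fun _ => eq_refl)
              (chB p) (chC q)) as [lc [Hperm Hmatch]].
  { intros x. rewrite <- !hom_single. apply Hpq. }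
  assert (inB : forall b, In b (chB p) <-> par b = Some p) by apply HB.
  assert (inC : forall c, In c lc <-> par c = Some q).
  { intros c. rewrite <- (proj2 (HC q)). split; apply Permutation_in; auto. symmetry; exact Hperm. }
  destruct (Forall2_bijection hom_equiv p q (chB p) lc) as [s [t [Hs Ht]]]; auto.
  { apply HB. }
  { apply (Permutation_NoDup Hperm), HC. }
  exists s, t. split; [|split; [|split]].
  - intros b Hb. apply inB in Hb. destruct (Hs b Hb) as [Hin [_ Rs]]. split; [apply inC|]; auto.
  - intros c Hc. apply inC in Hc. destruct (Ht c Hc) as [Hin Hst].
    split; [apply inB; exact Hin|]. destruct (Hs _ Hin) as [_ [_ Rs]]. rewrite Hst in Rs. exact Rs.
  - intros b Hb. apply inB in Hb. apply (Hs b Hb).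
  - intros c Hc. apply inC in Hc. apply (Ht c Hc).
Qed.

Lemma iso_of_hom_equiv_roots rB rC : is_tree B -> is_tree C ->
  par rB = None -> par rC = None -> hom_equiv rB rC -> iso B C.
Proof.
  intros TB TC HrB HrC Hr. apply (iso_of_child_matchings B C hom_equiv rB rC); auto.
  apply hom_equiv_child_matching.
Qed.

End HomMatching.

Theorem mainTheorem11 (A B C : rgraph) :
  is_tree A -> is_tree B -> is_tree C -> infinite_tree A ->
  iso (tprod A B) (tprod A C) -> iso B C.
Proof.
  intros TA TB TC Hinf Hiso.
  destruct (tree_children_list A TA) as [chA HA].
  destruct (tree_children_list B TB) as [chB HB].
  destruct (tree_children_list C TC) as [chC HC].
  destruct (infinite_tree_has_root A TA Hinf) as [rA HrA].
  destruct (tree_root_or_empty B TB) as [[rB HrB]|NB].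
  - destruct (tprod_iso_hom_roots A B C chA chB chC rA rB TA HA HB HC HrA HrB Hiso)
      as [rC [HrC Hhom]].
    apply (iso_of_hom_equiv_roots B C chB chC HB HC rB rC TB TC HrB HrC).
    intros x. apply (Nat.mul_cancel_l _ _ (hom A chA x rA)); [|apply Hhom].
    pose proof (hom_root_pos A chA rA x TA HA Hinf HrA). lia.
  - destruct (tree_root_or_empty C TC) as [[rC HrC]|NC].
    + destruct Hiso as [_ [psi _]]. destruct NB.
      exact (snd (proj1_sig (psi (root_pair A C rA rC HrA HrC)))).
    + exact (iso_of_empty B C NB NC).
Qed.
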